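(* Let $n\ge 1$ and $u,v\in\mathsf{Tr}(n)$. Then $v$ covers $u$ in the poset $(\mathsf{Tr}(n),\preccurlyeq)$ if and only if $u\preccurlyeq v$, there is exactly one index $i$ with $u_i<v_i$, and every $w\in\mathsf{Tr}(n)$ with $u\preccurlyeq w\preccurlyeq v$ satisfies $w=u$ or $w=v$. In particular, two triwords in a covering relation differ in exactly one letter.
   Context: A triword of size $n$ is a word $u=u_1\cdots u_n$ with $u_i\in\{0,1,2\}$, $u_1\ne 2$, and such that $u_i=0$ implies $u_j\neq 1$ for all $j>i$; $\mathsf{Tr}(n)$ denotes their set. The order $\preccurlyeq$ on $\mathsf{Tr}(n)$ is the componentwise order: $u\preccurlyeq v$ iff $u_i\le v_i$ for all $i\in[n]$. *)

From mathcomp Require Import all_boot.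
Set Implicit Arguments. Unset Strict Implicit. Unset Printing Implicit Defensive.

(* A word of size n over the alphabet {0,1,2}; letter u_{i+1} is [u i], i : 'I_n. *)
Definition word (n : nat) := {ffun 'I_n -> 'I_3}.

Definition is_triword (n : nat) (u : word n) : bool :=
  [forall i : 'I_n, (val i == 0) ==> (val (u i) != 2)] &&
  [forall i : 'I_n, forall j : 'I_n,
     ((val i < val j) && (val (u i) == 0)) ==> (val (u j) != 1)].

Definition tri_le (n : nat) (u v : word n) : bool :=
  [forall i : 'I_n, val (u i) <= val (v i)].

Definition covers (n : nat) (u v : word n) : Prop :=
  [/\ is_triword u, is_triword v, tri_le u v, u <> v &
      ~ (exists w : word n, [/\ is_triword w, tri_le u w, tri_le w v, w <> u & w <> v])].

From mathcomp Require Import all_boot.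
From mathcomp Require Import zify.
Set Implicit Arguments. Unset Strict Implicit. Unset Printing Implicit Defensive.

(* If u < v differ in two letters, let i be the last position where u_i < v_i
   and lower v_i to u_i.  The result w is again a triword: a new pattern
   "0 ... 1" in w would either start at i, where every later letter is a
   letter of u, or end at i, where w_i = u_i and the earlier 0 of v is also
   a 0 of u; both are patterns of u. *)

Lemma triwordP n (u : word n) :
  reflect ((forall i : 'I_n, val i = 0 -> val (u i) != 2) /\
           (forall i j : 'I_n, val i < val j -> val (u i) = 0 -> val (u j) != 1))
          (is_triword u).
Proof.
apply: (iffP andP) => -[h1 h2]; split.
- by move=> i /eqP i0; move/forallP/(_ i): h1; rewrite i0.
- by move=> i j ij /eqP ui0; move/forallP/(_ i)/forallP/(_ j): h2; rewrite ij ui0.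
- by apply/forallP=> i; apply/implyP=> /eqP; apply: h1.
- apply/forallP=> i; apply/forallP=> j; apply/implyP=> /andP[ij /eqP]; exact: h2.
Qed.

Lemma tri_leP n (u v : word n) :
  reflect (forall i, val (u i) <= val (v i)) (tri_le u v).
Proof. exact: forallP. Qed.

Definition strict_positions n (u v : word n) : {set 'I_n} :=
  [set i | val (u i) < val (v i)].

Definition replace_letter n (v : word n) (i : 'I_n) (a : 'I_3) : word n :=
  [ffun j => if j == i then a else v j].

Section Covering.

Variables (n : nat) (u v : word n).
Hypothesis le_uv : tri_le u v.

Lemma strict_positionsE : strict_positions u v = [set i | u i != v i].
Proof.
apply/setP=> i; rewrite !inE ltn_neqAle val_eqE.
by move/tri_leP: le_uv => ->; rewrite andbT.
Qed.

Lemma strict_positions_eq0 : (strict_positions u v == set0) = (u == v).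
Proof.
rewrite strict_positionsE; apply/eqP/eqP => [D0 | ->].
- by apply/ffunP=> i; apply/eqP; apply: contraFT (in_set0 i); rewrite -D0 inE.
- by apply/setP=> i; rewrite !inE eqxx.
Qed.

Lemma replace_letter_between (i : 'I_n) :
  tri_le u (replace_letter v i (u i)) /\ tri_le (replace_letter v i (u i)) v.
Proof.
by split; apply/tri_leP=> j; rewrite ffunE; case: eqP => [->|_] //;
  move/tri_leP: le_uv.
Qed.

Hypotheses (hu : is_triword u) (hv : is_triword v).

Lemma triword_replace_last (i : 'I_n) :
  (forall j : 'I_n, val i < val j -> u j = v j) ->
  is_triword (replace_letter v i (u i)).
Proof.
move/triwordP: hu => [u1 u2]; move/triwordP: hv => [v1 v2] last_i.
move/tri_leP: le_uv => le_letters; apply/triwordP; split.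
- by move=> a a0; rewrite ffunE; case: ifP => [/eqP <-|_]; [apply: u1 | apply: v1].
- move=> a b; rewrite !ffunE.
  case: (eqVneq a i) => [-> | ai]; case: (eqVneq b i) => [-> | bi] ab //.
  + by rewrite ltnn in ab.
  + by rewrite -last_i //; apply: u2.
  + by move=> va0; have := le_letters a; have := u2 a i ab; lia.
  + exact: v2.
Qed.

Lemma triword_strictly_between : 1 < #|strict_positions u v| ->
  exists w : word n, [/\ is_triword w, tri_le u w, tri_le w v, w <> u & w <> v].
Proof.
set D := strict_positions u v; case/card_gt1P=> a [b [aD bD ab]].
have [i iD i_max] := arg_maxnP (fun i : 'I_n => val i) aD.
have {}iD : i \in D := iD.
have [j [jD ji]] : exists j, j \in D /\ j != i.
  by case: (eqVneq a i) => [ai | ]; [exists b; rewrite -ai eq_sym | exists a].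
have last_i k : val i < val k -> u k = v k.
  apply: contraTeq => uv; rewrite -leqNgt; apply: i_max.
  by have : k \in D by rewrite /D strict_positionsE inE.
have [uw wv] := replace_letter_between i.
exists (replace_letter v i (u i)); split; rewrite ?triword_replace_last //.
- by move/ffunP/(_ j); rewrite ffunE (negbTE ji) => vu; move: jD; rewrite inE vu ltnn.
- by move/ffunP/(_ i); rewrite ffunE eqxx => uv; move: iD; rewrite inE uv ltnn.
Qed.

End Covering.

Lemma card_strict_positions_covers n (u v : word n) :
  covers u v -> #|strict_positions u v| = 1.
Proof.
case=> hu hv le_uv uv no_mid.
have : #|strict_positions u v| != 0.
  by rewrite cards_eq0 strict_positions_eq0 //; apply/eqP.
have : ~~ (1 < #|strict_positions u v|).
  by apply/negP=> /(triword_strictly_between le_uv hu hv).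
lia.
Qed.

Theorem proposition1p3 (n : nat) (hn : 1 <= n) (u v : word n)
  (hu : is_triword u) (hv : is_triword v) :
  (covers u v <->
    [/\ tri_le u v,
        #|[set i : 'I_n | val (u i) < val (v i)]| = 1 &
        forall w : word n, is_triword w -> tri_le u w -> tri_le w v ->
          w = u \/ w = v])
  /\ (covers u v -> #|[set i : 'I_n | u i != v i]| = 1).
Proof.
rewrite -/(strict_positions u v).
split=> [|c].
  2: by rewrite -strict_positionsE ?card_strict_positions_covers //; case: c.
split=> [c | [le_uv card1 mid]].
- case: (c) => _ _ le_uv _ no_mid.
  split; rewrite ?card_strict_positions_covers // => w hw uw wv.
  have [-> | wu] := eqVneq w u; first by left.
  have [-> | wv'] := eqVneq w v; first by right.
  by case: no_mid; exists w; split => //; apply/eqP.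
- split=> // [uv | [w [hw uw wv wu wv']]]; last by case: (mid w hw uw wv).
  have /eqP D0 : strict_positions u v == set0 by rewrite strict_positions_eq0 // uv.
  by rewrite D0 cards0 in card1.
Qed.
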